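(* Let $n\in\mathbb{N}$, let $\eta_1,\dots,\eta_{n+1}\in\mathbb{R}^d$ with $\eta_{n+1}=0$ and $\lvert(\nabla_+\eta)_k\rvert=1$ for $1\le k\le n$, and let $w_1,\dots,w_n\ge0$. Let $\alpha_i=\langle(\nabla_+\eta)_{i+1},(\nabla_+\eta)_i\rangle$ for $1\le i\le n-1$. Consider the linear system for $\sigma_1,\dots,\sigma_n$ (with $\sigma_0=0$): $\alpha_k\sigma_{k+1}-2\sigma_k+\alpha_{k-1}\sigma_{k-1}=-\tfrac{1}{n^2}w_k$ for $1\le k\le n-1$ (the term $\alpha_{k-1}\sigma_{k-1}$ being absent for $k=1$), and $\alpha_{n-1}\sigma_{n-1}-\sigma_n=-\tfrac1{n^2}w_n$. Its solution is $\sigma_k=\frac1n\sum_{j=1}^nG_{kj}w_j$, where $G_{kj}=\frac1n\sum_{i=1}^{\min\{j,k\}}\frac{p_{ij}p_{ik}}{\beta_i}$, $p_{ij}=\prod_{m=i}^{j-1}\frac{\alpha_m}{\beta_{m+1}}$ (empty product $=1$), and $\beta_n=1$, $\beta_i=2-\alpha_i^2/\beta_{i+1}$ for $1\le i\le n-1$. Moreover, $\sigma_k>0$ for all $1\le k\le n$ for every choice of $w_1,\dots,w_n\ge0$ not all zero if and only if $\alpha_i>0$ for every $1\le i\le n-1$.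
   Context: For a finite sequence $f$, $(\nabla_+f)_k=n(f_{k+1}-f_k)$. In the chain model one takes $w_j=\lvert(\nabla_+\dot\eta)_j\rvert^2$ (with $\dot\eta_{n+1}=0$), and the system above is the tension (constraint) equation of the chain. *)

From HB Require Import structures.
From mathcomp Require Import all_boot all_order all_algebra.
Set Implicit Arguments. Unset Strict Implicit. Unset Printing Implicit Defensive.
Import Order.TTheory GRing.Theory Num.Theory.
Local Open Scope ring_scope.

Definition dot (R : realFieldType) (d : nat) (u v : 'rV[R]_d) : R :=
  \sum_(i < d) u 0 i * v 0 i.

(* (nabla_+ eta)_k = n (eta_{k+1} - eta_k); sequences are 1-indexed nat -> _ *)
Definition gradp (R : realFieldType) (d n : nat) (eta : nat -> 'rV[R]_d) (k : nat)
  : 'rV[R]_d := n%:R *: (eta k.+1 - eta k).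

Definition alpha (R : realFieldType) (d n : nat) (eta : nat -> 'rV[R]_d) (i : nat) : R :=
  dot (gradp n eta i.+1) (gradp n eta i).

(* betaRev a n j = beta_{n-j}: beta_n = 1, beta_i = 2 - alpha_i^2 / beta_{i+1} *)
Fixpoint betaRev (R : realFieldType) (a : nat -> R) (n j : nat) : R :=
  match j with
  | 0 => 1
  | j'.+1 => 2 - (a (n - j'.+1)%N) ^+ 2 / betaRev a n j'
  end.

Definition beta (R : realFieldType) (a : nat -> R) (n i : nat) : R :=
  betaRev a n (n - i)%N.

Definition pcoef (R : realFieldType) (a : nat -> R) (n i j : nat) : R :=
  \prod_(i <= m < j) (a m / beta a n m.+1).

Definition Gker (R : realFieldType) (a : nat -> R) (n k j : nat) : R :=
  n%:R^-1 * \sum_(1 <= i < (minn j k).+1) (pcoef a n i j * pcoef a n i k / beta a n i).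

Definition sigmaF (R : realFieldType) (a : nat -> R) (n : nat) (w : nat -> R) (k : nat) : R :=
  n%:R^-1 * \sum_(1 <= j < n.+1) (Gker a n k j * w j).

Definition tension_system (R : realFieldType) (a : nat -> R) (n : nat)
  (w sigma : nat -> R) : Prop :=
  let s := fun k => if k == 0%N then 0 else sigma k in
  (forall k, (1 <= k)%N -> (k <= n.-1)%N ->
     a k * s k.+1 - 2 * s k + a k.-1 * s k.-1 = - (w k / (n%:R ^+ 2))) /\
  ((0 < n)%N -> a n.-1 * s n.-1 - s n = - (w n / (n%:R ^+ 2))).

From HB Require Import structures.
From mathcomp Require Import all_boot all_order all_algebra.
From mathcomp Require Import ring lra zify.
Set Implicit Arguments. Unset Strict Implicit. Unset Printing Implicit Defensive.
Import Order.TTheory GRing.Theory Num.Theory.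
Local Open Scope ring_scope.

(* Write beta_k for the continued-fraction sequence beta_n = 1,
   beta_k = 2 - alpha_k^2 / beta_{k+1}, p_{ij} = prod_{m=i}^{j-1} alpha_m / beta_{m+1}
   and G_{kj} = sum_{i <= min(j,k)} p_{ij} p_{ik} / beta_i (called [Gsum]; the
   kernel [Gker] of the statement is G / n).  The proof is an LU factorisation
   of the tridiagonal tension matrix, done by hand on recurrences:
   - Z_k = sum_j G_{kj} w_j and the tail sums Y_k = sum_{j >= k} p_{kj} w_j obey
     beta_{k+1} Z_{k+1} = alpha_k Z_k + Y_{k+1} and Y_k = w_k + p_{k,k+1} Y_{k+1};
     eliminating Y shows that Z / n^2 solves the tension system;
   - backward elimination shows the homogeneous system has only the zero
     solution, so Z / n^2 is the unique solution;
   - when every beta_k is positive, all G_{kj} are positive as soon as all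
     alpha_i are, while a unit load at node i+1 gives
     sigma_i = alpha_i / beta_{i+1} * G_{ii} / n^2, of the sign of alpha_i.
   For the chain, |alpha_k| <= 1 (Cauchy-Schwarz on unit vectors), whence
   beta_k >= 1 > 0 and both parts of the theorem follow. *)

Lemma sum_nat_gt0 (R : numDomainType) (f : nat -> R) m n k :
  (m <= k < n)%N -> (forall j, (m <= j < n)%N -> 0 <= f j) -> 0 < f k ->
  0 < \sum_(m <= j < n) f j.
Proof.
move=> hk hf fk; rewrite big_nat_cond lt_def psumr_neq0 => [|j /andP[hj _]]; last exact: hf.
rewrite sumr_ge0 ?andbT => [|j /andP[hj _]]; last exact: hf.
by apply/hasP; exists k; rewrite ?mem_index_iota // hk fk.
Qed.

Section GreenKernel.
Variables (R : realFieldType) (a : nat -> R) (n : nat).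

Lemma beta_last : beta a n n = 1.
Proof. by rewrite /beta subnn. Qed.

Lemma beta_step k : (k < n)%N -> beta a n k = 2 - a k ^+ 2 / beta a n k.+1.
Proof.
move=> hk; rewrite /beta.
have -> : (n - k = (n - k.+1).+1)%N by lia.
by rewrite /=; have -> : (n - (n - k.+1).+1 = k)%N by lia.
Qed.

Lemma beta_ge1 : (forall k, (1 <= k < n)%N -> a k ^+ 2 <= 1) ->
  forall k, (1 <= k <= n)%N -> 1 <= beta a n k.
Proof.
move=> ha.
suff H : forall j, (j < n)%N -> 1 <= betaRev a n j.
  by move=> k hk; rewrite /beta; apply: H; lia.
elim=> [|j IH] hj /=; first by rewrite lexx.
have hb := IH (ltnW hj).
have hb0 : 0 < betaRev a n j by apply: lt_le_trans hb; rewrite ltr01.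
have : a (n - j.+1)%N ^+ 2 / betaRev a n j <= 1.
  rewrite ler_pdivrMr // mul1r; apply: le_trans hb; apply: ha; lia.
lra.
Qed.

Lemma pcoef_id i : pcoef a n i i = 1.
Proof. by rewrite /pcoef big_geq. Qed.

Lemma pcoef_stepr i k : (i <= k)%N ->
  pcoef a n i k.+1 = pcoef a n i k * (a k / beta a n k.+1).
Proof. by move=> h; rewrite /pcoef big_nat_recr. Qed.

Lemma pcoef_stepl i j : (i < j)%N ->
  pcoef a n i j = a i / beta a n i.+1 * pcoef a n i.+1 j.
Proof. by move=> h; rewrite /pcoef big_ltn. Qed.

Definition Gsum (k j : nat) : R :=
  \sum_(1 <= i < (minn j k).+1) (pcoef a n i j * pcoef a n i k / beta a n i).

Lemma Gsum_sym k j : Gsum k j = Gsum j k.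
Proof. by rewrite /Gsum minnC; apply: eq_bigr => i _; rewrite [_ * pcoef _ _ _ k]mulrC. Qed.

(* Recursion of G in its first index; the extra term p_{k+1,j} appears
   exactly when the range of summation grows, i.e. when k < j. *)
Lemma Gsum_step k j : beta a n k.+1 != 0 -> (1 <= j)%N ->
  beta a n k.+1 * Gsum k.+1 j = a k * Gsum k j + (if (k < j)%N then pcoef a n k.+1 j else 0).
Proof.
move=> hb hj.
have shift r : (r <= k)%N ->
    \sum_(1 <= i < r.+1) (pcoef a n i j * pcoef a n i k.+1 / beta a n i) =
    a k / beta a n k.+1 * \sum_(1 <= i < r.+1) (pcoef a n i j * pcoef a n i k / beta a n i).
  move=> hr; rewrite mulr_sumr; apply: eq_big_nat => i hi.
  by rewrite pcoef_stepr; [ring | lia].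
rewrite /Gsum; case: (leqP j k) => hjk.
  have -> : minn j k.+1 = j by lia.
  by rewrite shift // addr0; field.
have -> : minn j k.+1 = k.+1 by lia.
by rewrite big_nat_recr //= shift // pcoef_id; field.
Qed.

Variable w : nat -> R.

(* Z_k = n^2 sigma_k, and the tail sums Y_k = sum_{j >= k} p_{kj} w_j. *)
Definition Zsol (k : nat) : R := \sum_(1 <= j < n.+1) Gsum k j * w j.

Definition Ytail (k : nat) : R := \sum_(k <= j < n.+1) pcoef a n k j * w j.

Lemma sigmaF_Zsol k : (0 < n)%N -> sigmaF a n w k = Zsol k / n%:R ^+ 2.
Proof.
move=> hn; rewrite /sigmaF /Zsol /Gker.
under eq_bigr => j _ do rewrite -mulrA.
by rewrite -mulr_sumr; field; rewrite pnatr_eq0 -lt0n.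
Qed.

Lemma Zsol0 : Zsol 0 = 0.
Proof. by rewrite /Zsol big1 // => j _; rewrite /Gsum minn0 big_geq // mul0r. Qed.

Lemma Ytail_step k : (k < n)%N -> Ytail k = w k + a k / beta a n k.+1 * Ytail k.+1.
Proof.
move=> hk; rewrite /Ytail big_ltn ?ltnS 1?ltnW // pcoef_id mul1r mulr_sumr.
congr (_ + _); apply: eq_big_nat => j hj.
by rewrite pcoef_stepl ?mulrA //; lia.
Qed.

Lemma Ytail_last : Ytail n = w n.
Proof. by rewrite /Ytail big_ltn // big_geq // pcoef_id mul1r addr0. Qed.

(* Forward recursion of Z, obtained by summing Gsum_step against w. *)
Lemma Zsol_step k : beta a n k.+1 != 0 -> (k < n)%N ->
  beta a n k.+1 * Zsol k.+1 = a k * Zsol k + Ytail k.+1.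
Proof.
move=> hb hk; rewrite /Zsol !mulr_sumr.
have -> : \sum_(1 <= j < n.+1) beta a n k.+1 * (Gsum k.+1 j * w j) =
    \sum_(1 <= j < n.+1) (a k * (Gsum k j * w j)
                          + (if (k < j)%N then pcoef a n k.+1 j else 0) * w j).
  by apply: eq_big_nat => j hj; rewrite mulrA Gsum_step //; [ring | lia].
rewrite big_split /=; congr (_ + _).
rewrite (big_cat_nat _ (n := k.+1)) //=; last by lia.
rewrite big_nat_cond big1 ?add0r => [|j /andP[/andP[_ hj] _]].
  by apply: eq_big_nat => j /andP[hj _]; rewrite hj.
by rewrite ltnNge -ltnS hj mul0r.
Qed.

(* Field identity behind the row equations: eliminating Z_{k+1} and Y_k from
   the two recurrences relating Z_{k-1}, Z_k, Z_{k+1} and Y_k, Y_{k+1}. *)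
Lemma three_term_identity (ak akm b b' zm z zp y y' wk : R) :
  b' != 0 -> b' * zp = ak * z + y' -> b * z = akm * zm + y ->
  y = wk + ak / b' * y' -> b = 2 - ak ^+ 2 / b' ->
  ak * zp - 2 * z + akm * zm = - wk.
Proof.
move=> hb' hzp hz hy hb.
have -> : zp = (ak * z + y') / b' by rewrite -hzp; field.
have -> : akm * zm = b * z - y by rewrite hz; ring.
by rewrite hy hb; field.
Qed.

(* The LU factorisation needs the pivots beta_1, ..., beta_n to be nonzero. *)
Hypothesis beta_neq0 : forall k, (1 <= k <= n)%N -> beta a n k != 0.

Lemma Zsol_row k : (1 <= k < n)%N ->
  a k * Zsol k.+1 - 2 * Zsol k + a k.-1 * Zsol k.-1 = - w k.
Proof.
move=> hk.
have hb' : beta a n k.+1 != 0 by apply: beta_neq0; lia.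
have hzk := Zsol_step (beta_neq0 (k := k.-1.+1) ltac:(lia)) ltac:(lia).
rewrite prednK in hzk; last by lia.
apply: (three_term_identity hb' (Zsol_step hb' _) hzk (Ytail_step _)); try lia.
by rewrite -beta_step //; lia.
Qed.

Lemma Zsol_last : (0 < n)%N -> a n.-1 * Zsol n.-1 - Zsol n = - w n.
Proof.
move=> hn.
have := Zsol_step (beta_neq0 (k := n.-1.+1) ltac:(lia)) ltac:(lia).
rewrite prednK // beta_last mul1r Ytail_last => ->; ring.
Qed.

(* One step of backward elimination: if b' d_{k+1} = a_k d_k and row k of the
   homogeneous system holds, then beta_k d_k = a_{k-1} d_{k-1}. *)
Lemma backward_step_identity (b' dp d ak x : R) :
  b' != 0 -> b' * dp = ak * d -> ak * dp - 2 * d + x = 0 ->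
  (2 - ak ^+ 2 / b') * d = x.
Proof.
move=> hb' hdp.
have -> : dp = ak * d / b' by rewrite -hdp; field.
move=> hrow; have -> : x = 2 * d - ak * (ak * d / b') by lra.
by field.
Qed.

(* Uniqueness: the homogeneous tension system has only the zero solution.
   Backward elimination gives beta_k d_k = alpha_{k-1} d_{k-1}, then forward
   substitution from d_0 = 0 kills every d_k. *)
Lemma homogeneous_tension_zero (d : nat -> R) : d 0%N = 0 ->
  (forall k, (1 <= k)%N -> (k <= n.-1)%N ->
     a k * d k.+1 - 2 * d k + a k.-1 * d k.-1 = 0) ->
  ((0 < n)%N -> a n.-1 * d n.-1 - d n = 0) ->
  forall k, (k <= n)%N -> d k = 0.
Proof.
move=> hd0 hrow hlast.
have back j : (j < n)%N -> beta a n (n - j) * d (n - j)%N = a (n - j).-1 * d (n - j).-1.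
  elim: j => [|j IH] hj.
    by rewrite subn0 beta_last mul1r; have := hlast hj; lra.
  have := IH (ltnW hj); have -> : (n - j = (n - j.+1).+1)%N by lia.
  rewrite /= [beta a n (n - j.+1)]beta_step; last by lia.
  move/backward_step_identity; apply; first by apply: beta_neq0; lia.
  by apply: hrow; lia.
elim=> [|k IH] hk //.
have hbk : beta a n k.+1 != 0 by apply: beta_neq0; lia.
have := back (n - k.+1)%N ltac:(lia).
have -> : (n - (n - k.+1) = k.+1)%N by lia.
rewrite /= IH ?(ltnW hk) // mulr0 => /eqP.
by rewrite mulf_eq0 (negbTE hbk) => /eqP.
Qed.

Lemma Zsol_tension : (0 < n)%N ->
  tension_system a n w (fun k => Zsol k / n%:R ^+ 2).
Proof.
move=> hn; have hn0 : (n%:R : R) != 0 by rewrite pnatr_eq0 -lt0n.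
have ext0 j : (if j == 0%N then 0 else Zsol j / n%:R ^+ 2) = Zsol j / n%:R ^+ 2.
  by case: eqP => // ->; rewrite Zsol0 mul0r.
split=> [k h1 h2|_] /=; rewrite !ext0.
- have -> : w k = - (a k * Zsol k.+1 - 2 * Zsol k + a k.-1 * Zsol k.-1).
    by rewrite Zsol_row ?opprK //; lia.
  by field.
- have -> : w n = - (a n.-1 * Zsol n.-1 - Zsol n) by rewrite Zsol_last ?opprK.
  by field.
Qed.

Lemma tension_unique (s1 s2 : nat -> R) :
  tension_system a n w s1 -> tension_system a n w s2 ->
  forall k, (1 <= k <= n)%N -> s1 k = s2 k.
Proof.
move=> [row1 last1] [row2 last2] k hk.
pose d j := (if j == 0%N then 0 else s1 j) - (if j == 0%N then 0 else s2 j).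
have /eqP : d k = 0.
  apply: homogeneous_tension_zero; rewrite /d ?eqxx ?subrr //; last by lia.
  - by move=> j h1 h2; have := row1 j h1 h2; have := row2 j h1 h2; lra.
  - by move=> hn; have := last1 hn; have := last2 hn; lra.
have hk0 : (k == 0%N) = false by lia.
by rewrite /d hk0 subr_eq0 => /eqP.
Qed.

Lemma tension_system_ext (s1 s2 : nat -> R) :
  (forall k, (1 <= k <= n)%N -> s1 k = s2 k) ->
  tension_system a n w s1 -> tension_system a n w s2.
Proof.
move=> e [row last].
have e0 j : (j <= n)%N ->
    (if j == 0%N then 0 else s1 j) = (if j == 0%N then 0 else s2 j).
  by case: eqP => // /eqP hj hjn; rewrite e //; lia.
split=> [k h1 h2|hn].
  have [hk1 hk hkm] : [/\ (k.+1 <= n)%N, (k <= n)%N & (k.-1 <= n)%N] by split; lia.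
  by rewrite -(e0 _ hk1) -(e0 _ hk) -(e0 _ hkm); exact: row.
by rewrite -(e0 _ (leq_pred n)) -(e0 _ (leqnn n)); exact: last.
Qed.

Lemma tension_system_iff (sigma : nat -> R) : (0 < n)%N ->
  tension_system a n w sigma <->
  (forall k, (1 <= k <= n)%N -> sigma k = sigmaF a n w k).
Proof.
move=> hn; split=> [hsigma k hk|hsigma].
  by rewrite sigmaF_Zsol //; exact: tension_unique hsigma (Zsol_tension hn) k hk.
apply: tension_system_ext (Zsol_tension hn) => k hk.
by rewrite hsigma // sigmaF_Zsol.
Qed.

End GreenKernel.

Lemma sigmaF_unit_load (R : realFieldType) (a : nat -> R) n i : (1 <= i < n)%N ->
  sigmaF a n (fun j => (j == i.+1)%:R) i = Gsum a n i i.+1 / n%:R ^+ 2.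
Proof.
move=> hi; rewrite /sigmaF.
under eq_bigr => j _ do rewrite mulr_natr mulrb.
rewrite -big_mkcond big_nat1_eq ifT; last by lia.
by rewrite /Gker mulrA -invfM -expr2 mulrC.
Qed.

Lemma Gsum_superdiag (R : realFieldType) (a : nat -> R) n i :
  beta a n i.+1 != 0 -> (1 <= i)%N ->
  Gsum a n i i.+1 = a i / beta a n i.+1 * Gsum a n i i.
Proof.
move=> hb hi; rewrite Gsum_sym.
by apply: (mulfI hb); rewrite Gsum_step // ltnn addr0; field.
Qed.

Section Positivity.
Variables (R : realFieldType) (a : nat -> R) (n : nat).
Hypothesis beta_gt0 : forall k, (1 <= k <= n)%N -> 0 < beta a n k.

(* Diagonal entries are sums of squares weighted by 1 / beta. *)
Lemma Gsum_diag_ge0 i : (i <= n)%N -> 0 <= Gsum a n i i.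
Proof.
move=> hi; rewrite /Gsum minnn big_nat_cond; apply: sumr_ge0 => l /andP[hl _].
by rewrite -expr2 divr_ge0 ?sqr_ge0 // ltW // beta_gt0 //; lia.
Qed.

Hypothesis alpha_gt0 : forall m, (1 <= m < n)%N -> 0 < a m.

Lemma pcoef_gt0 i j : (1 <= i)%N -> (j <= n)%N -> 0 < pcoef a n i j.
Proof.
move=> hi hj; rewrite /pcoef big_nat_cond; apply: prodr_gt0 => m /andP[hm _].
by apply: divr_gt0; [apply: alpha_gt0 | apply: beta_gt0]; lia.
Qed.

(* Every kernel entry is positive: already its i = 1 term is. *)
Lemma Gsum_gt0 k j : (1 <= k <= n)%N -> (1 <= j <= n)%N -> 0 < Gsum a n k j.
Proof.
move=> hk hj.
have term_gt0 i : (1 <= i < (minn j k).+1)%N ->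
    0 < pcoef a n i j * pcoef a n i k / beta a n i.
  move=> hi; apply: divr_gt0; last by apply: beta_gt0; lia.
  by apply: mulr_gt0; apply: pcoef_gt0; lia.
by apply: (sum_nat_gt0 (k := 1%N)) => [|i hi|]; [lia | apply: ltW; exact: term_gt0 | apply: term_gt0; lia].
Qed.

Lemma sigmaF_gt0 (w : nat -> R) : (forall j, (1 <= j <= n)%N -> 0 <= w j) ->
  (exists j, (1 <= j <= n)%N /\ w j <> 0) ->
  forall k, (1 <= k <= n)%N -> 0 < sigmaF a n w k.
Proof.
move=> hw [j0 [hj0 wj0]] k hk.
have n_inv_gt0 : 0 < (n%:R : R)^-1 by rewrite invr_gt0 ltr0n; lia.
have Gker_gt0 j : (1 <= j <= n)%N -> 0 < Gker a n k j.
  by move=> hj; rewrite /Gker mulr_gt0 ?Gsum_gt0.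
rewrite /sigmaF mulr_gt0 //; apply: (sum_nat_gt0 (k := j0)) => [|j hj|]; first by lia.
  by rewrite mulr_ge0 ?hw ?ltW ?Gker_gt0 //; lia.
by rewrite mulr_gt0 ?Gker_gt0 // lt_def hw ?andbT //; apply/eqP.
Qed.

End Positivity.

(* Necessity: a unit load at node i+1 gives sigma_i of the sign of alpha_i. *)
Lemma positivity_iff (R : realFieldType) (a : nat -> R) n :
  (forall k, (1 <= k <= n)%N -> 0 < beta a n k) ->
  (forall w : nat -> R, (forall j, (1 <= j <= n)%N -> 0 <= w j) ->
     (exists j, (1 <= j <= n)%N /\ w j <> 0) ->
     forall k, (1 <= k <= n)%N -> 0 < sigmaF a n w k)
  <-> (forall i, (1 <= i <= n.-1)%N -> 0 < a i).
Proof.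
move=> beta_gt0; split=> [pos i hi|alpha_gt0]; last first.
  by apply: sigmaF_gt0 => // m hm; apply: alpha_gt0; lia.
rewrite ltNge; apply/negP => ai_le0.
have hb : 0 < beta a n i.+1 by apply: beta_gt0; lia.
have : 0 < sigmaF a n (fun j => (j == i.+1)%:R) i.
  apply: pos => [j _||]; [exact: ler0n | exists i.+1 | lia].
  by split; [lia | apply/eqP; rewrite eqxx oner_eq0].
rewrite sigmaF_unit_load ?Gsum_superdiag ?gt_eqF //; try lia.
rewrite ltNge => /negP; apply.
rewrite pmulr_lle0 ?invr_gt0 ?exprn_gt0 ?ltr0n; try lia.
have Gii_ge0 : 0 <= Gsum a n i i by apply: Gsum_diag_ge0 => //; lia.
by rewrite -mulrA mulr_le0_ge0 // mulr_ge0 // invr_ge0 ltW.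
Qed.

Lemma dot_unit_sq_le1 (R : realFieldType) d (u v : 'rV[R]_d) :
  dot u u = 1 -> dot v v = 1 -> dot u v ^+ 2 <= 1.
Proof.
move=> hu hv.
have upper : 2 * dot u v <= dot u u + dot v v.
  rewrite /dot -big_split mulr_sumr /=; apply: ler_sum => i _.
  by have := sqr_ge0 (u 0 i - v 0 i); nra.
have lower : - (2 * dot u v) <= dot u u + dot v v.
  rewrite /dot -big_split mulr_sumr -sumrN /=; apply: ler_sum => i _.
  by have := sqr_ge0 (u 0 i + v 0 i); nra.
rewrite hu hv in upper lower; nra.
Qed.

(* |alpha_k| <= 1 forces beta_k >= 1 > 0, and the two parts of the theorem are
   tension_system_iff and positivity_iff. *)
Theorem proposition3p2 (R : realFieldType) (d n : nat) (eta : nat -> 'rV[R]_d)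
  (heta : eta n.+1 = 0)
  (hunit : forall k, (1 <= k <= n)%N -> dot (gradp n eta k) (gradp n eta k) = 1) :
  (forall w : nat -> R, (forall j, (1 <= j <= n)%N -> 0 <= w j) ->
     forall sigma : nat -> R,
       tension_system (alpha n eta) n w sigma <->
       (forall k, (1 <= k <= n)%N -> sigma k = sigmaF (alpha n eta) n w k))
  /\
  ((forall w : nat -> R, (forall j, (1 <= j <= n)%N -> 0 <= w j) ->
      (exists j, (1 <= j <= n)%N /\ w j <> 0) ->
      forall k, (1 <= k <= n)%N -> 0 < sigmaF (alpha n eta) n w k)
   <-> (forall i, (1 <= i <= n.-1)%N -> 0 < alpha n eta i)).
Proof.
have [n0|n_gt0] := posnP n.
  subst n; split=> [w _ sigma|]; split.
  - by move=> _ k; lia.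
  - by move=> _; split=> [k|]; lia.
  - by move=> _ i; lia.
  - by move=> _ w _ [j []]; lia.
have alpha_sq_le1 k : (1 <= k < n)%N -> alpha n eta k ^+ 2 <= 1.
  by move=> hk; apply: dot_unit_sq_le1; apply: hunit; lia.
have beta_gt0 k : (1 <= k <= n)%N -> 0 < beta (alpha n eta) n k.
  by move=> hk; apply: lt_le_trans (beta_ge1 alpha_sq_le1 hk); exact: ltr01.
split; last exact: positivity_iff.
move=> w _ sigma; apply: tension_system_iff => // k hk.
by rewrite gt_eqF // beta_gt0.
Qed.
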